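(* Let $n\ge2$, let $\mathcal{G}$ be one of $F_n$, $T_n$, $V_n$, and let $g\in\mathcal{G}$ be represented by the tree pair $(\mathrm{G}_{+},\sigma,\mathrm{G}_{-})$. Let $\ell_u(\mathrm{G}_{+})\mapsto\ell_v(\mathrm{G}_{-})$ be a branch of $g$, let $h\in F_n$ and let $h'=(h)_{[v]}$. Then $\mathcal{N}(gh')=\mathcal{N}(g)+\mathcal{N}(h)-1$.
   Context: $F_n,T_n,V_n$ are the Brown–Thompson groups of piecewise-linear maps of $[0,1]$ (resp. the circle, resp. right-continuous bijections of $[0,1]$) with finitely many $n$-adic breakpoints and slopes powers of $n$; elements are represented by pairs $(\mathrm{T}_+,\sigma,\mathrm{T}_-)$ of rooted finite $n$-ary trees with the same number of leaves and a bijection $\sigma$ between their leaves, and each element has a unique reduced such representative. $\mathcal{N}(g)$ is the number of leaves of each tree in the reduced tree pair of $g$. Nodes of the infinite rooted $n$-ary tree are identified with words over $\{0,\dots,n-1\}$ (the path from the root); a leaf of a finite tree corresponds to such a word, and the path from the root to leaf $\omega$ is denoted $\ell_\omega(\mathrm{T})$. A branch of $g$ is a correspondence $\ell_{\omega}(\mathrm{T}_+)\mapsto\ell_{\sigma(\omega)}(\mathrm{T}_-)$ between a leaf of the source tree and the leaf of the target tree it is mapped to. For $h\in F_n$ with tree pair $(\mathrm{H}_+,\mathrm{id},\mathrm{H}_-)$ and a word $v$, $(h)_{[v]}$ denotes the element whose tree pair is obtained from a tree pair $(\mathrm{T},\mathrm{id},\mathrm{T})$ having $v$ as a leaf by attaching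 $\mathrm{H}_+$ to the leaf $v$ of the source tree and $\mathrm{H}_-$ to the leaf $v$ of the target tree (so it acts as $h$ on the subinterval corresponding to $v$ and as the identity elsewhere). *)

(* Combinatorial model of the Brown--Thompson groups F_n, T_n, V_n
   via tree pairs and their (faithful) prefix-replacement action on infinite
   n-ary words (= points of the Cantor set {0,..,n-1}^N). *)
From mathcomp Require Import all_boot.
Set Implicit Arguments. Unset Strict Implicit. Unset Printing Implicit Defensive.

Inductive ntree (n : nat) : Type :=
| Leaf : ntree n
| Node : ('I_n -> ntree n) -> ntree n.
Arguments Leaf {n}.
Arguments Node {n}.

(* Nodes are words over {0,..,n-1} (path from the root).  The leaves of a tree,
   listed from left to right. *)
Fixpoint leaves (n : nat) (t : ntree n) : seq (seq 'I_n) :=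
  match t with
  | Leaf => [:: [::]]
  | Node f => flatten [seq [seq i :: u | u <- leaves (f i)] | i <- ord_enum n]
  end.

(* A tree pair (T+, sigma, T-): leaf number i of T+ (left-to-right, from 0)
   is sent to leaf number (nth 0 sigma i) of T-. *)
Record tpair (n : nat) := TPair { tplus : ntree n; tsig : seq nat; tminus : ntree n }.

Definition nleaves n (P : tpair n) : nat := size (leaves (tplus P)).

Definition tp_wf n (P : tpair n) : Prop :=
  size (leaves (tminus P)) = nleaves P /\ perm_eq (tsig P) (iota 0 (nleaves P)).

Inductive thompson_kind := KF | KT | KV.

Definition in_kind (k : thompson_kind) n (P : tpair n) : Prop :=
  match k with
  | KF => tsig P = iota 0 (nleaves P)
  | KT => exists r, tsig P = rot r (iota 0 (nleaves P))
  | KV => True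
  end.

(* Reduced tree pair: there is no common caret that can be cancelled, i.e. no
   n consecutive leaves u0,...,u(n-1) of T+ (the children of u) sent by sigma,
   in order, to n consecutive leaves v0,...,v(n-1) of T- (the children of v). *)
Definition reduced n (P : tpair n) : Prop :=
  ~ exists (i : nat) (u v : seq 'I_n), forall j : 'I_n,
      [/\ nth [::] (leaves (tplus P)) (i + j) = rcons u j,
          nth 0 (tsig P) (i + j) = nth 0 (tsig P) i + j &
          nth [::] (leaves (tminus P)) (nth 0 (tsig P) i + j) = rcons v j].

Definition iword n := nat -> 'I_n.

Definition prefixb n (u : seq 'I_n) (w : iword n) : bool := mkseq w (size u) == u.

Definition splice n (v u : seq 'I_n) (w : iword n) : iword n :=
  fun m => if m < size v then nth (w m) v m else w (m - size v + size u).

Definition act n (P : tpair n) (w : iword n) : iword n :=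
  let L := leaves (tplus P) in
  let j := find (fun u => prefixb u w) L in
  splice (nth [::] (leaves (tminus P)) (nth 0 (tsig P) j)) (nth [::] L j) w.

Definition represents n (P : tpair n) (f : iword n -> iword n) : Prop :=
  forall w m, act P w m = f w m.

(* (h)_[v]: acts as h on the cone of the word v, and as the identity elsewhere. *)
Definition localize n (v : seq 'I_n) (h : iword n -> iword n) (w : iword n) : iword n :=
  if prefixb v w then splice v [::] (h (fun m => w (m + size v))) else w.

(* Product in the group, with right actions: x (g h) = (x g) h. *)
Definition gmul n (g h : iword n -> iword n) : iword n -> iword n := fun w => h (g w).

(* The product g (h)_[v] is represented by grafting the trees of h below the branch
   u |-> v of g: H+ is attached at the leaf u of G+, H- at the leaf v of G-, and in the
   bijection the leaf u is replaced by the identity block of h.  This pair has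
   N(g) + N(h) - 1 leaves, and it is reduced.  Indeed, for n >= 2 a pair is reduced iff
   no internal node x of its source tree is one on whose cone the element acts by a
   prefix replacement x w |-> y w.  Below u such a node would be one for h; beside u it
   would be one for g; above u it would force h to be the identity, hence again one for
   g.  Finally the leaves of the source tree of a reduced pair are exactly the minimal
   words on whose cones the element acts by prefix replacement, so they depend on the
   element only, and all reduced pairs of an element have the same number of leaves. *)

From mathcomp Require Import all_boot zify.
From Stdlib Require Import FunctionalExtensionality.
Set Implicit Arguments. Unset Strict Implicit. Unset Printing Implicit Defensive.

(** * Splicing a block into a sequence *)

Definition expand_nth (A : Type) (s : seq A) i (M : seq A) := take i s ++ M ++ drop i.+1 s.

Section ExpandNth.
Variables (A : Type) (s M : seq A) (i : nat).
Hypothesis lt_i_s : i < size s.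

Lemma size_expand_nth : size (expand_nth s i M) = size s + size M - 1.
Proof. by rewrite !size_cat size_take lt_i_s size_drop; lia. Qed.

Lemma nth_expand_nth d x : nth d (expand_nth s i M) x =
  if x < i then nth d s x
  else if x < i + size M then nth d M (x - i) else nth d s (x - size M + 1).
Proof.
rewrite nth_cat size_take lt_i_s; case: ltnP => [lt_xi | le_ix]; first by rewrite nth_take.
rewrite nth_cat ltn_subLR // nth_drop; case: ltnP => // le_x; congr nth; lia.
Qed.

Lemma nth_expand_nth_block d k : k < size M -> nth d (expand_nth s i M) (i + k) = nth d M k.
Proof. by move=> lt_k; rewrite nth_expand_nth ltnNge leq_addr ltn_add2l lt_k addKn. Qed.

End ExpandNth.

Lemma perm_expand_nth (A : eqType) (s M : seq A) i :
  perm_eq (expand_nth s i M) (M ++ take i s ++ drop i.+1 s).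
Proof. exact/permEl/perm_catCA. Qed.

(* Slot [p] is replaced by a block of [m] slots; the value at [y = p] itself is never used. *)
Definition expand_index (p m y : nat) := if y < p then y else y + m - 1.

Lemma expand_index_cases N p m j : p < N -> j < N + m - 1 ->
  (exists2 k, k < m & j = p + k) \/ (exists2 y, (y < N) && (y != p) & j = expand_index p m y).
Proof.
move=> lt_p lt_j; rewrite /expand_index.
case: (ltnP j p) => [lt_jp | le_pj]; first by right; exists j; rewrite ?lt_jp //; lia.
case: (ltnP j (p + m)) => [lt_jpm | le_pmj]; first by left; exists (j - p); lia.
by right; exists (j - m + 1); [lia | rewrite ifF; lia].
Qed.

Lemma nth_expand_nth_index (A : Type) d (s M : seq A) p y : p < size s -> y < size s -> y != p ->
  nth d (expand_nth s p M) (expand_index p (size M) y) = nth d s y.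
Proof.
move=> lt_p lt_y neq_yp; rewrite nth_expand_nth // /expand_index.
case: (ltnP y p) => [lt_yp | le_py]; first by rewrite /= lt_yp.
have lt_py : p < y by rewrite ltn_neqAle eq_sym neq_yp.
by rewrite /= !ifF; [congr nth | |]; lia.
Qed.

Lemma map_expand_index_low p m a k : a + k <= p ->
  map (expand_index p m) (iota a k) = iota a k.
Proof.
move=> le_p; apply: map_id_in => y; rewrite mem_iota /expand_index => /andP[_ lt_y].
by rewrite ifT //; lia.
Qed.

Lemma map_expand_index_high p m a k : p < a ->
  map (expand_index p m) (iota a k) = iota (a + m - 1) k.
Proof.
move=> lt_p; have iota_shift b : iota b k = map (addn b) (iota 0 k) by rewrite -iotaDl addn0.
rewrite (iota_shift a) (iota_shift (a + m - 1)) -map_comp; apply: eq_map => y /=.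
by rewrite /expand_index ifF; lia.
Qed.

Lemma iota_cat3 a b c : iota 0 a ++ iota a b ++ iota (a + b) c = iota 0 (a + b + c).
Proof. by rewrite -iotaD -iotaD addnA. Qed.

Definition expand_sig (sg : seq nat) i m :=
  expand_nth (map (expand_index (nth 0 sg i) m) sg) i (iota (nth 0 sg i) m).

Lemma nth_expand_sig_block sg i m k : i < size sg -> k < m ->
  nth 0 (expand_sig sg i m) (i + k) = nth 0 sg i + k.
Proof. by move=> lt_i lt_k; rewrite nth_expand_nth_block ?size_map ?size_iota // nth_iota. Qed.

Lemma nth_expand_sig_index sg i m y : i < size sg -> y < size sg -> y != i ->
  nth 0 (expand_sig sg i m) (expand_index i m y) = expand_index (nth 0 sg i) m (nth 0 sg y).
Proof.
move=> lt_i lt_y neq_yi.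
have := @nth_expand_nth_index _ 0 (map (expand_index (nth 0 sg i) m) sg) (iota (nth 0 sg i) m) i y.
by rewrite size_iota size_map (nth_map 0) //; apply.
Qed.

Lemma nth_perm_iota_lt sg N x : perm_eq sg (iota 0 N) -> x < N -> nth 0 sg x < N.
Proof.
move=> perm_sg lt_x; have : nth 0 sg x \in sg by rewrite mem_nth // (perm_size perm_sg) size_iota.
by rewrite (perm_mem perm_sg) mem_iota.
Qed.

Lemma nth_perm_iota_inj sg N x y : perm_eq sg (iota 0 N) -> x < N -> y < N ->
  nth 0 sg x = nth 0 sg y -> x = y.
Proof.
move=> perm_sg lt_x lt_y /eqP; have size_sg : size sg = N by rewrite (perm_size perm_sg) size_iota.
by rewrite nth_uniq ?size_sg ?(perm_uniq perm_sg) ?iota_uniq // => /eqP.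
Qed.

Lemma perm_expand_sig sg N i m : perm_eq sg (iota 0 N) -> i < N ->
  perm_eq (expand_sig sg i m) (iota 0 (N + m - 1)).
Proof.
move=> perm_sg lt_iN; set p := nth 0 sg i; set f := expand_index p m.
have size_sg : size sg = N by rewrite (perm_size perm_sg) size_iota.
have lt_pN : p < N by apply: nth_perm_iota_lt.
have iota_N : iota 0 N = iota 0 p ++ p :: iota p.+1 (N - p.+1).
  by rewrite -{1}(subnKC lt_pN) iotaD -addn1 iotaD -catA.
have perm_rest : perm_eq (take i sg ++ drop i.+1 sg) (iota 0 p ++ iota p.+1 (N - p.+1)).
  rewrite -(perm_cons p); apply: perm_trans (permEl (perm_catCA [:: p] _ _)) _.
  rewrite /= -drop_nth ?size_sg // cat_take_drop; apply: perm_trans perm_sg _.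
  by rewrite iota_N; apply: permEl (perm_catCA _ [:: p] _).
apply: perm_trans (perm_expand_nth _ _ _) _.
rewrite -map_take -map_drop -map_cat.
apply: perm_trans (_ : perm_eq _ (iota p m ++ map f (iota 0 p ++ iota p.+1 (N - p.+1)))) _.
  by rewrite perm_cat2l; apply: perm_map.
rewrite map_cat map_expand_index_low ?add0n // map_expand_index_high //.
rewrite (_ : p.+1 + m - 1 = p + m); last by lia.
rewrite perm_catCA iota_cat3 (_ : p + m + (N - p.+1) = N + m - 1) ?perm_refl //; lia.
Qed.

Lemma size_expand_sig sg i m : i < size sg -> size (expand_sig sg i m) = size sg + m - 1.
Proof. by move=> lt_i; rewrite size_expand_nth size_map ?size_iota. Qed.

Lemma nth_expand_sig sg i m x : i < size sg -> x < size sg + m - 1 ->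
  nth 0 (expand_sig sg i m) x =
  if x < i then expand_index (nth 0 sg i) m (nth 0 sg x)
  else if x < i + m then nth 0 sg i + (x - i)
  else expand_index (nth 0 sg i) m (nth 0 sg (x - m + 1)).
Proof.
move=> lt_i lt_x; rewrite nth_expand_nth ?size_map // size_iota.
case: ltnP => [lt_xi | le_ix]; first by rewrite (nth_map 0) //; lia.
case: ltnP => [lt_xim | le_imx]; first by rewrite nth_iota; lia.
by rewrite (nth_map 0) //; lia.
Qed.

Ltac case_inner_ifs :=
  repeat match goal with
  | |- context [if ?b then _ else _] =>
      lazymatch b with
      | context [if _ then _ else _] => fail
      | _ => case: (boolP b) => ? /=
      end
  end.

Lemma nth_rot_iota N r x : r < N -> x < N ->
  nth 0 (rot r (iota 0 N)) x = if x < N - r then x + r else x + r - N.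
Proof.
move=> lt_rN lt_xN; rewrite /rot nth_cat size_drop size_iota.
case: ltnP => [lt_x | le_x]; first by rewrite nth_drop nth_iota; lia.
by rewrite nth_take ?nth_iota; lia.
Qed.

Lemma expand_sig_rot N r i m : r < N -> i < N -> 0 < m ->
  expand_sig (rot r (iota 0 N)) i m =
  rot (if i < N - r then r else r + m - 1) (iota 0 (N + m - 1)).
Proof.
move=> lt_rN lt_iN m_gt0; have size_sg : size (rot r (iota 0 N)) = N by rewrite size_rot size_iota.
apply: (@eq_from_nth _ 0); rewrite size_expand_sig size_sg ?size_rot ?size_iota //.
move=> x lt_x; rewrite nth_expand_sig ?size_sg // /expand_index.
by case: ltnP => ?; [|case: ltnP => ?]; rewrite !nth_rot_iota; try lia; case_inner_ifs; lia.
Qed.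

(** * Infinite words *)

Section Words.
Variable n : nat.
Implicit Types (x y : seq 'I_n) (t w : iword n).

Definition prepend x t : iword n :=
  fun m => if m < size x then nth (t 0) x m else t (m - size x).

Definition dropw k w : iword n := fun m => w (m + k).

Lemma prepend0 t : prepend [::] t = t.
Proof. by apply: functional_extensionality => m; rewrite /prepend subn0. Qed.

Lemma prepend_nth d x t m : m < size x -> prepend x t m = nth d x m.
Proof. by move=> lt_m_x; rewrite /prepend lt_m_x; apply: set_nth_default. Qed.

Lemma prepend_addl x t m : prepend x t (size x + m) = t m.
Proof. by rewrite /prepend ltnNge leq_addr addKn. Qed.

Lemma prepend_cat x y t : prepend x (prepend y t) = prepend (x ++ y) t.
Proof.
apply: functional_extensionality => m; rewrite /prepend size_cat nth_cat.
case: (ltnP m (size x)) => [lt_m_x | le_x_m].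
  by rewrite ltn_addr //; apply: set_nth_default.
case: ltnP => [lt_m_y | le_y_m]; first by rewrite ifT; [|lia].
by rewrite ifF ?subnDA //; lia.
Qed.

Lemma prepend_inj x : injective (prepend x).
Proof.
move=> t1 t2 eq_t; apply: functional_extensionality => m.
by have := congr1 (fun w => w (size x + m)) eq_t; rewrite !prepend_addl.
Qed.

Lemma dropw_prepend x t : dropw (size x) (prepend x t) = t.
Proof. by apply: functional_extensionality => m; rewrite /dropw addnC prepend_addl. Qed.

Lemma prefixb_prepend x t : prefixb x (prepend x t).
Proof.
apply/eqP; case: x => [|a x] //; apply: (@eq_from_nth _ a); rewrite size_mkseq //.
by move=> m lt_m; rewrite nth_mkseq // (prepend_nth a).
Qed.

Lemma prepend_dropw x w : prefixb x w -> prepend x (dropw (size x) w) = w.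
Proof.
move/eqP=> eq_x; apply: functional_extensionality => m; rewrite /prepend /dropw.
by case: ltnP => [lt_m_x | /subnK -> //]; rewrite -{2}eq_x nth_mkseq.
Qed.

Lemma splice_prepend x y t : splice y x (prepend x t) = prepend y t.
Proof.
apply: functional_extensionality => m; rewrite /splice /prepend.
by case: ltnP => [lt_my | le_ym]; [apply: set_nth_default | rewrite ltnNge leq_addl addnK].
Qed.

Lemma prefixb_cons (a : 'I_n) x w :
  prefixb (a :: x) w = (w 0 == a) && prefixb x (dropw 1 w).
Proof.
rewrite /prefixb /mkseq /= eqseq_cons -(addn0 1) iotaDl -map_comp.
by congr (_ && (_ == _)); apply: eq_map => m; rewrite /dropw /= addnC.
Qed.

Lemma prepend_head w : prepend [:: w 0] (dropw 1 w) = w.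
Proof. by apply: prepend_dropw; rewrite prefixb_cons eqxx. Qed.

Lemma prepend_comparable x y t1 t2 :
  prepend x t1 = prepend y t2 -> prefix x y || prefix y x.
Proof.
wlog le_xy : x y t1 t2 / size x <= size y => [wlog_le | eq_w].
  by case: (leqP (size x) (size y)) => [|/ltnW] le eq_w;
    [exact: wlog_le eq_w | rewrite orbC; exact: wlog_le (esym eq_w)].
apply/orP; left; rewrite prefixE; case: x le_xy eq_w => [|a x] le_xy eq_w.
  by rewrite take0.
apply/eqP/(@eq_from_nth _ a); rewrite size_takel // => m lt_m.
have := congr1 (fun w => w m) eq_w.
by rewrite nth_take // (prepend_nth a) // (prepend_nth a) //; apply: leq_trans le_xy.
Qed.

Lemma prefixb_comparable x y w :
  prefixb x w -> prefixb y w -> prefix x y || prefix y x.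
Proof.
move=> /prepend_dropw eq_x /prepend_dropw eq_y.
by apply: (@prepend_comparable _ _ (dropw (size x) w) (dropw (size y) w)); rewrite eq_x eq_y.
Qed.

Hypothesis n_gt1 : 1 < n.

Lemma exists_neq (c : 'I_n) : exists c', c' != c.
Proof.
have [n0 n1] : 0 < n /\ 1 < n by lia.
case: (eqVneq c (Ordinal n0)) => [-> | neq_c]; first by exists (Ordinal n1).
by exists (Ordinal n0); rewrite eq_sym.
Qed.

Lemma prepend_split x y (F : iword n -> iword n) :
  (forall t, prepend x (F t) = prepend y t) ->
  exists2 z, y = x ++ z & forall t, F t = prepend z t.
Proof.
move=> eq_F; pose d0 := Ordinal (ltnW n_gt1).
have le_xy : size x <= size y.
  rewrite leqNgt; apply/negP => lt_yx.
  have [c' neq_c'] := exists_neq (nth d0 x (size y)).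
  have := congr1 (fun w => w (size y + 0)) (eq_F (fun=> c')).
  rewrite prepend_addl addn0 (prepend_nth d0) // => eq_c.
  by rewrite -eq_c eqxx in neq_c'.
have /prefixP[z eq_y] : prefix x y.
  case/orP: (prepend_comparable (eq_F (fun=> d0))) => // /prefixP[z eq_x].
  suff z0 : z = [::] by rewrite eq_x z0 cats0 prefix_refl.
  by apply/eqP; rewrite -size_eq0 -leqn0 -(leq_add2l (size y)) addn0 -size_cat -eq_x.
by exists z => // t; apply: (@prepend_inj x); rewrite prepend_cat -eq_y eq_F.
Qed.

Lemma prepend_uniq x y : (forall t, prepend x t = prepend y t) -> x = y.
Proof.
move=> eq_xy; have [[|c z] -> eq_z] := prepend_split (F := id) eq_xy; first by rewrite cats0.
have [c' neq_c'] := exists_neq c.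
have := congr1 (fun w => w 0) (eq_z (fun=> c')); rewrite /prepend /= => eq_c.
by rewrite -eq_c eqxx in neq_c'.
Qed.

End Words.

(** * Trees and grafting *)

Definition proper_prefix (A : eqType) (x y : seq A) := prefix x y && (size x < size y).

Lemma proper_prefix_cons (A : eqType) (a : A) x y :
  proper_prefix (a :: x) (a :: y) = proper_prefix x y.
Proof. by rewrite /proper_prefix /= eqxx. Qed.

Lemma lt_size_nth_rcons (A : Type) (s : seq (seq A)) i q a :
  nth [::] s i = rcons q a -> i < size s.
Proof. by rewrite ltnNge; apply: contraPN => /(nth_default [::]) ->; case: q. Qed.

Section Trees.
Variable n : nat.
Implicit Types (T : ntree n) (f : 'I_n -> ntree n) (x y l : seq 'I_n) (w : iword n).

Definition internal T x := exists2 l, l \in leaves T & proper_prefix x l.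

Lemma mem_leaves_Node f x :
  (x \in leaves (Node f)) = (if x is a :: y then y \in leaves (f a) else false).
Proof.
apply/flattenP/idP => [[_ /mapP[a _ ->] /mapP[y y_leaf ->]] // | ].
case: x => // a y y_leaf; exists [seq a :: l | l <- leaves (f a)]; last exact: map_f.
by apply: map_f; rewrite mem_ord_enum.
Qed.

Lemma leaves_Node_split f a :
  exists L1 L2, leaves (Node f) = L1 ++ map (cons a) (leaves (f a)) ++ L2.
Proof.
rewrite /=; case: (splitPr (mem_ord_enum a)) => E1 E2; rewrite map_cat flatten_cat.
by do 2 eexists.
Qed.

Lemma leaves_uniq T : uniq (leaves T).
Proof.
elim: T => [|f IH] //=.
apply: (@allpairs_uniq_dep _ (fun=> _) _ (fun a l => a :: l)) => //.
  exact: ord_enum_uniq.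
by move=> [a x] [b y] _ _ /= [-> ->].
Qed.

Lemma leaves_prefix_free T l1 l2 :
  l1 \in leaves T -> l2 \in leaves T -> prefix l1 l2 -> l1 = l2.
Proof.
elim: T l1 l2 => [|f IH] l1 l2; first by rewrite !inE => /eqP -> /eqP ->.
rewrite !mem_leaves_Node; case: l1 l2 => [|a l1] [|b l2] //= l1_leaf l2_leaf.
by case/andP => /eqP eq_ab; subst b => /(IH a _ _ l1_leaf l2_leaf) ->.
Qed.

Lemma leaves_cover T w : exists2 l, l \in leaves T & prefixb l w.
Proof.
elim: T w => [|f IH] w; first by exists [::]; rewrite ?inE //; apply/eqP.
have [l l_leaf pre_l] := IH (w 0) (dropw 1 w).
by exists (w 0 :: l); rewrite ?mem_leaves_Node // prefixb_cons eqxx.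
Qed.

Lemma eq_leaves_prefixb T l1 l2 w : l1 \in leaves T -> l2 \in leaves T ->
  prefixb l1 w -> prefixb l2 w -> l1 = l2.
Proof.
move=> l1_leaf l2_leaf pre1 pre2.
case/orP: (prefixb_comparable pre1 pre2) => [pre12 | pre21].
  exact: leaves_prefix_free l1_leaf l2_leaf pre12.
exact/esym/(leaves_prefix_free l2_leaf l1_leaf pre21).
Qed.

Lemma size_leaves_Node f : 1 < n -> 1 < size (leaves (Node f)).
Proof.
move=> n_gt1; pose a0 := Ordinal (ltnW n_gt1); pose a1 := Ordinal n_gt1.
have [l0 l0_leaf _] := leaves_cover (f a0) (fun=> a0).
have [l1 l1_leaf _] := leaves_cover (f a1) (fun=> a0).
have : uniq [:: a0 :: l0; a1 :: l1] by [].
move/uniq_leq_size => /(_ (leaves (Node f))); apply=> l.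
by rewrite !inE => /orP[] /eqP ->; rewrite mem_leaves_Node.
Qed.

Hypothesis n_gt0 : 0 < n.

Lemma size_leaves_gt0 T : 0 < size (leaves T).
Proof. by have [l l_leaf _] := leaves_cover T (fun=> Ordinal n_gt0); case: (leaves T) l_leaf. Qed.

Lemma internal_root f : internal (Node f) [::].
Proof.
have [l l_leaf _] := leaves_cover (Node f) (fun=> Ordinal n_gt0).
by exists l => //; move: l_leaf; rewrite mem_leaves_Node /proper_prefix; case: l.
Qed.

Lemma internal_cons f a x : internal (Node f) (a :: x) <-> internal (f a) x.
Proof.
split=> [[[|b l] //] | [l l_leaf pre_l]]; last first.
  by exists (a :: l); rewrite ?mem_leaves_Node ?proper_prefix_cons.
rewrite mem_leaves_Node /proper_prefix /= => l_leaf /andP[/andP[/eqP eq_ab pre_l] lt_xl]; subst b.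
by exists l; rewrite // /proper_prefix pre_l.
Qed.

Lemma leaf_internal_or_below T x :
  [\/ x \in leaves T, internal T x | exists2 l, l \in leaves T & proper_prefix l x].
Proof.
elim: T x => [|f IH] [|a x].
- by apply: Or31; rewrite inE.
- by apply: Or33; exists [::]; rewrite ?inE.
- by apply: Or32; apply: internal_root.
case: (IH a x) => [x_leaf | x_int | [l l_leaf pre_l]].
- by apply: Or31; rewrite mem_leaves_Node.
- by apply: Or32; apply/internal_cons.
- by apply: Or33; exists (a :: l); rewrite ?mem_leaves_Node ?proper_prefix_cons.
Qed.

Lemma leaves_of_leaf_children f : (forall a, f a = Leaf) ->
  leaves (Node f) = [seq [:: a] | a <- enum 'I_n].
Proof.
move=> leaf_f; rewrite enumT unlock /=.
by elim: (ord_enum n) => //= a s ->; rewrite leaf_f.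
Qed.

Lemma internal_caret T x : internal T x ->
  exists2 q, prefix x q & exists k, forall j : 'I_n, nth [::] (leaves T) (k + j) = rcons q j.
Proof.
elim: T x => [|f IH] x; first by case=> l; rewrite inE => /eqP ->; case: x.
have caret_child a y : internal (f a) y -> exists2 q, prefix (a :: y) q &
    exists k, forall j : 'I_n, nth [::] (leaves (Node f)) (k + j) = rcons q j.
  move=> /IH[q pre_q [k caret_k]]; have [L1 [L2 ->]] := leaves_Node_split f a.
  exists (a :: q); first by rewrite /= eqxx.
  exists (size L1 + k) => j; have lt_kj := lt_size_nth_rcons (caret_k j).
  by rewrite -addnA nth_cat ltnNge leq_addr addKn nth_cat size_map lt_kj (nth_map [::]) ?caret_k.
case: x => [_ | a x /internal_cons/caret_child //].
have [a | all_leaves] := pickP (fun a => if f a is Node _ then true else false).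
  case E: (f a) => [|g] // _.
  have root_int : internal (f a) [::] by rewrite E; apply: internal_root.
  by have [q _ caret] := caret_child a [::] root_int; exists q; rewrite ?prefix0s.
exists [::]; rewrite ?prefix0s //; exists 0 => j; rewrite leaves_of_leaf_children ?add0n.
  by rewrite (nth_map j) ?size_enum_ord // nth_ord_enum.
by move=> a; move: (all_leaves a); case: (f a).
Qed.

End Trees.

Lemma flatten_map_flatten (A B : Type) (F : A -> seq B) (X : seq (seq A)) :
  flatten (map F (flatten X)) = flatten (map (fun x => flatten (map F x)) X).
Proof. by elim: X => //= x X IH; rewrite map_cat flatten_cat IH. Qed.

Section Graft.
Variable n : nat.
Implicit Types (T S : ntree n) (u l : seq 'I_n).

Fixpoint graft T u S : ntree n :=
  match u, T with
  | [::], _ => S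
  | a :: u', Node f => Node (fun b => if b == a then graft (f b) u' S else f b)
  | _ :: _, Leaf => Leaf
  end.

Lemma leaves_graft T u S : u \in leaves T ->
  leaves (graft T u S) =
  flatten [seq (if l == u then map (cat u) (leaves S) else [:: l]) | l <- leaves T].
Proof.
elim: T u => [|f IH] [|a u] //; rewrite ?mem_leaves_Node //.
  by rewrite /= cats0 map_id.
move=> u_leaf; rewrite [leaves (Node f)]/= flatten_map_flatten /= -map_comp.
congr flatten; apply: eq_map => b /=; case: eqP => [-> | neq_ba].
  rewrite IH // map_flatten -!map_comp; congr flatten; apply: eq_map => l /=.
  by rewrite eqseq_cons eqxx /=; case: ifP => // _; rewrite -map_comp.
rewrite -[LHS]flatten_seq1 -!map_comp; congr flatten; apply: eq_map => l /=.
by rewrite eqseq_cons; case: eqP.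
Qed.

Lemma leaves_graft_nth T i S : i < size (leaves T) ->
  leaves (graft T (nth [::] (leaves T) i) S) =
  expand_nth (leaves T) i (map (cat (nth [::] (leaves T) i)) (leaves S)).
Proof.
move=> lt_i; set L := leaves T; set u := nth [::] L i.
have L_split : L = take i L ++ u :: drop i.+1 L by rewrite -drop_nth // cat_take_drop.
have := leaves_uniq T; rewrite -/L {1}L_split cat_uniq /= negb_or.
case/and3P=> _ /andP[u_take _] /andP[u_drop _].
have keep s : u \notin s ->
    flatten [seq (if l == u then map (cat u) (leaves S) else [:: l]) | l <- s] = s.
  move=> u_s; rewrite -[RHS]flatten_seq1; congr flatten; apply/eq_in_map => l l_s.
  by case: eqVneq l_s => // ->; rewrite (negbTE u_s).
by rewrite leaves_graft ?mem_nth // -/L {1}L_split map_cat flatten_cat /= eqxx !keep.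
Qed.

Lemma internal_graft T u S x : u \in leaves T -> internal (graft T u S) x ->
  internal T x \/ exists2 p, internal S p & x = u ++ p.
Proof.
move=> u_leaf [l]; rewrite leaves_graft // => /flatten_mapP[l0 l0_leaf].
case: eqP => [_ /mapP[p p_leaf ->] | _]; last by rewrite inE => /eqP ->; left; exists l0.
case/andP; rewrite prefixE take_cat size_cat; case: ltnP => [lt_xu | le_ux] /eqP eq_x lt_x.
  by left; exists u; rewrite // /proper_prefix prefixE eq_x eqxx lt_xu.
right; exists (take (size x - size u) p); last by rewrite eq_x.
by exists p; rewrite // /proper_prefix prefix_take size_take_min gtn_min ltnn orbF ltn_subLR.
Qed.

End Graft.

(** * Action of tree pairs *)

Section Action.
Variable n : nat.
Implicit Types (P Q : tpair n) (f : iword n -> iword n) (x y l : seq 'I_n) (t w : iword n).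

Definition replaces_prefix f x := exists y, forall t, f (prepend x t) = prepend y t.

Lemma act_leaf P j t : j < nleaves P ->
  act P (prepend (nth [::] (leaves (tplus P)) j) t) =
  prepend (nth [::] (leaves (tminus P)) (nth 0 (tsig P) j)) t.
Proof.
move=> lt_j; rewrite /act; set L := leaves (tplus P); set w := prepend _ t.
have has_w : has (fun u => prefixb u w) L.
  by apply/hasP; exists (nth [::] L j); rewrite ?mem_nth ?prefixb_prepend.
have lt_find : find (fun u => prefixb u w) L < size L by rewrite -has_find.
suff -> : find (fun u => prefixb u w) L = j by rewrite splice_prepend.
apply/eqP; rewrite -(nth_uniq [::] lt_find lt_j (leaves_uniq _)); apply/eqP.
apply: (@eq_leaves_prefixb _ (tplus P) _ _ w); rewrite ?mem_nth ?prefixb_prepend //.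
exact: (nth_find [::] has_w).
Qed.

Lemma act_from_leaves P f :
  (forall j t, j < nleaves P -> f (prepend (nth [::] (leaves (tplus P)) j) t) =
     prepend (nth [::] (leaves (tminus P)) (nth 0 (tsig P) j)) t) ->
  act P = f.
Proof.
move=> f_leaves; apply: functional_extensionality => w.
have [l l_leaf /prepend_dropw <-] := leaves_cover (tplus P) w.
have lt_l : index l (leaves (tplus P)) < nleaves P by rewrite index_mem.
by rewrite -(nth_index [::] l_leaf) act_leaf // f_leaves.
Qed.

Lemma replaces_prefix_leaf P l : l \in leaves (tplus P) -> replaces_prefix (act P) l.
Proof.
move=> l_leaf; have lt_l : index l (leaves (tplus P)) < nleaves P by rewrite index_mem.
set j := index l (leaves (tplus P)) in lt_l *.
by exists (nth [::] (leaves (tminus P)) (nth 0 (tsig P) j)) => t; rewrite -act_leaf // nth_index.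
Qed.

Lemma replaces_prefix_extend f x q : replaces_prefix f x -> prefix x q -> replaces_prefix f q.
Proof.
by move=> [y f_x] /prefixP[s ->]; exists (y ++ s) => t; rewrite -!prepend_cat f_x.
Qed.

Hypothesis n_gt1 : 1 < n.
Let n_gt0 : 0 < n. Proof. exact: ltnW. Qed.

Lemma leaf_children_caret T y : (forall j : 'I_n, rcons y j \in leaves T) ->
  exists k, forall j : 'I_n, nth [::] (leaves T) (k + j) = rcons y j.
Proof.
move=> children; pose j0 := Ordinal n_gt0.
have y_int : internal T y.
  by exists (rcons y j0); [apply: children | rewrite /proper_prefix prefix_rcons size_rcons ltnSn].
have [q /prefixP[[|c r] eq_q] [k caret_k]] := internal_caret n_gt0 y_int.
  by exists k; rewrite eq_q cats0 in caret_k.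
have q_leaf : rcons q j0 \in leaves T.
  by rewrite -caret_k mem_nth // (lt_size_nth_rcons (caret_k j0)).
have pre_yc : prefix (rcons y c) (rcons q j0) by rewrite eq_q rcons_cat /= -cat_rcons prefix_prefix.
have := congr1 size (leaves_prefix_free (children c) q_leaf pre_yc).
by rewrite !size_rcons eq_q size_cat /=; lia.
Qed.

Lemma reduced_no_replacement P x : reduced P ->
  internal (tplus P) x -> ~ replaces_prefix (act P) x.
Proof.
move=> redP x_int /replaces_prefix_extend replaces_x.
have [q /replaces_x[y act_q] [k caret_k]] := internal_caret n_gt0 x_int.
set s := nth 0 (tsig P); set Lm := leaves (tminus P).
have image_j (j : 'I_n) : nth [::] Lm (s (k + j)) = rcons y j.
  apply: prepend_uniq => // t; rewrite -act_leaf ?(lt_size_nth_rcons (caret_k j)) //.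
  by rewrite caret_k -!cats1 -!prepend_cat act_q.
have [k2 caret2] : exists k2, forall j : 'I_n, nth [::] Lm (k2 + j) = rcons y j.
  by apply: leaf_children_caret => j; rewrite -image_j mem_nth // (lt_size_nth_rcons (image_j j)).
have s_kj (j : 'I_n) : s (k + j) = k2 + j.
  have [lt1 lt2] := (lt_size_nth_rcons (image_j j), lt_size_nth_rcons (caret2 j)).
  by apply/eqP; rewrite -(nth_uniq [::] lt1 lt2 (leaves_uniq _)) image_j caret2.
rewrite /s in s_kj; apply: redP; exists k, q, y => j.
have := s_kj (Ordinal n_gt0); rewrite /= !addn0 => s_k.
by rewrite caret_k s_kj s_k caret2.
Qed.

Lemma reduced_of_no_replacement P :
  (forall x, internal (tplus P) x -> ~ replaces_prefix (act P) x) -> reduced P.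
Proof.
move=> no_repl [i [u [v caret]]]; pose j0 := Ordinal n_gt0.
have [u_leaf _ _] := caret j0.
apply: (no_repl u).
  exists (rcons u j0); last by rewrite /proper_prefix prefix_rcons size_rcons ltnSn.
  by rewrite -u_leaf mem_nth // (lt_size_nth_rcons u_leaf).
exists v => t; have [leaf_i sig_i leaf_v] := caret (t 0).
rewrite -(prepend_head t) !prepend_cat !cats1 -leaf_i act_leaf ?sig_i ?leaf_v //.
exact: lt_size_nth_rcons leaf_i.
Qed.

Lemma reducedP P :
  reduced P <-> forall x, internal (tplus P) x -> ~ replaces_prefix (act P) x.
Proof. by split=> [/reduced_no_replacement | /reduced_of_no_replacement]. Qed.

Lemma mem_leaves_reduced P l : reduced P ->
  l \in leaves (tplus P) <->
  replaces_prefix (act P) l /\ forall x, proper_prefix x l -> ~ replaces_prefix (act P) x.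
Proof.
move=> /reducedP no_repl; split=> [l_leaf | [repl_l min_l]].
  split=> [|x pre_x]; first exact: replaces_prefix_leaf.
  by apply: no_repl; exists l.
case: (leaf_internal_or_below n_gt0 (tplus P) l) => [// | l_int | [l' l'_leaf pre_l']].
  by case: (no_repl l l_int).
by case: (min_l l' pre_l'); apply: replaces_prefix_leaf.
Qed.

Lemma nleaves_reduced_act P Q : reduced P -> reduced Q -> act P = act Q ->
  nleaves P = nleaves Q.
Proof.
move=> redP redQ act_PQ; apply/perm_size/uniq_perm; rewrite ?leaves_uniq // => l.
apply/idP/idP.
  by move/(mem_leaves_reduced l redP); rewrite act_PQ => /(mem_leaves_reduced l redQ).
by move/(mem_leaves_reduced l redQ); rewrite -act_PQ => /(mem_leaves_reduced l redP).
Qed.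

End Action.

Section Localize.
Variable n : nat.
Implicit Types (v : seq 'I_n) (h : iword n -> iword n) (t w : iword n).

Lemma localize_prepend v h t : localize v h (prepend v t) = prepend v (h t).
Proof.
rewrite /localize prefixb_prepend (_ : (fun m => _) = t); last exact: dropw_prepend.
by rewrite -[h t in LHS]prepend0 splice_prepend.
Qed.

Lemma localize_out v h w : ~~ prefixb v w -> localize v h w = w.
Proof. by rewrite /localize => /negbTE ->. Qed.

Lemma localize_id v w : localize v id w = w.
Proof.
case: (boolP (prefixb v w)) => [/prepend_dropw <- | /localize_out //].
by rewrite localize_prepend.
Qed.

End Localize.

Lemma act_plus_Leaf n (P : tpair n) : 1 < n -> tp_wf P -> tplus P = Leaf -> act P = id.
Proof.
move=> n_gt1 [size_minus _] plus_leaf.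
have minus_leaf : tminus P = Leaf.
  move: size_minus; rewrite /nleaves plus_leaf; case: (tminus P) => // f eq1.
  by have := size_leaves_Node f n_gt1; rewrite eq1.
apply: act_from_leaves => j t; rewrite /nleaves plus_leaf minus_leaf /=.
by rewrite -[[:: [::]]]/(nseq 1 [::]) !nth_nseq !if_same prepend0.
Qed.

(** * The product g (h)_[v] *)

Section Product.
Variables (n : nat) (P H : tpair n) (i : nat).
Hypotheses (n_gt1 : 1 < n) (wfP : tp_wf P) (redP : reduced P).
Hypotheses (wfH : tp_wf H) (sigH : in_kind KF H) (redH : reduced H).
Hypothesis lt_i : i < nleaves P.

Local Notation N := (nleaves P).
Local Notation m := (nleaves H).
Local Notation s := (nth 0 (tsig P)).
Local Notation u := (nth [::] (leaves (tplus P)) i).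
Local Notation v := (nth [::] (leaves (tminus P)) (nth 0 (tsig P) i)).
Local Notation gh := (gmul (act P) (localize v (act H))).

Definition product_pair :=
  TPair (graft (tplus P) u (tplus H)) (expand_sig (tsig P) i m) (graft (tminus P) v (tminus H)).

Let n_gt0 : 0 < n. Proof. exact: ltnW. Qed.
Let m_gt0 : 0 < m. Proof. exact: size_leaves_gt0. Qed.
Let size_sigP : size (tsig P) = N. Proof. by rewrite (perm_size wfP.2) size_iota. Qed.
Let size_minusP : size (leaves (tminus P)) = N. Proof. exact: wfP.1. Qed.
Let lt_s x : x < N -> s x < N. Proof. exact: nth_perm_iota_lt wfP.2. Qed.
Let u_leaf : u \in leaves (tplus P). Proof. exact: mem_nth. Qed.
Let v_leaf : v \in leaves (tminus P). Proof. by rewrite mem_nth // size_minusP lt_s. Qed.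

Lemma gh_inside t : gh (prepend u t) = prepend v (act H t).
Proof. by rewrite /gmul act_leaf // localize_prepend. Qed.

Lemma gh_outside w : ~~ prefixb u w -> gh w = act P w.
Proof.
move=> not_uw; have [l l_leaf /prepend_dropw eq_w] := leaves_cover (tplus P) w.
set x := index l (leaves (tplus P)); have lt_x : x < N by rewrite index_mem.
have neq_xi : x != i.
  by apply: contra not_uw => /eqP eq_xi; rewrite -eq_w -eq_xi nth_index ?prefixb_prepend.
have neq_sx : s x != s i.
  by apply: contra neq_xi => /eqP/(nth_perm_iota_inj wfP.2 lt_x lt_i) ->.
rewrite /gmul -eq_w -(nth_index [::] l_leaf) act_leaf // localize_out //.
apply: contra neq_sx => pre_v.
rewrite -(nth_uniq [::] _ _ (leaves_uniq (tminus P))) ?size_minusP ?lt_s //.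
apply/eqP/(eq_leaves_prefixb _ v_leaf (prefixb_prepend _ _) pre_v).
by rewrite mem_nth // size_minusP lt_s.
Qed.

Lemma gh_leaf y t : y < N -> y != i ->
  gh (prepend (nth [::] (leaves (tplus P)) y) t) = prepend (nth [::] (leaves (tminus P)) (s y)) t.
Proof.
move=> lt_y neq_yi; rewrite gh_outside ?act_leaf //; apply: contra neq_yi => pre_u.
rewrite -(nth_uniq [::] lt_y lt_i (leaves_uniq _)); apply/eqP/esym.
by apply: (eq_leaves_prefixb u_leaf _ pre_u (prefixb_prepend _ _)); rewrite mem_nth.
Qed.

Lemma leaves_plus_product :
  leaves (tplus product_pair) = expand_nth (leaves (tplus P)) i (map (cat u) (leaves (tplus H))).
Proof. exact: leaves_graft_nth. Qed.

Lemma leaves_minus_product :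
  leaves (tminus product_pair) =
  expand_nth (leaves (tminus P)) (s i) (map (cat v) (leaves (tminus H))).
Proof. by apply: leaves_graft_nth; rewrite size_minusP lt_s. Qed.

Lemma nleaves_product : nleaves product_pair = N + m - 1.
Proof. by rewrite /nleaves leaves_plus_product size_expand_nth // size_map. Qed.

Lemma act_product : act product_pair = gh.
Proof.
have lt_si : s i < size (leaves (tminus P)) by rewrite size_minusP lt_s.
apply: act_from_leaves => j t; rewrite nleaves_product leaves_plus_product leaves_minus_product /=.
case/(expand_index_cases lt_i) => [[k lt_k ->] | [y /andP[lt_y neq_yi] ->]].
  rewrite nth_expand_sig_block ?size_sigP // !nth_expand_nth_block ?size_map ?wfH.1 //.
  rewrite !(nth_map [::]) ?wfH.1 // -prepend_cat gh_inside act_leaf // prepend_cat.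
  by rewrite sigH nth_iota.
have := nth_expand_nth_index [::] (map (cat u) (leaves (tplus H))) lt_i lt_y neq_yi.
rewrite size_map => ->; rewrite nth_expand_sig_index ?size_sigP // gh_leaf //.
have neq_s : s y != s i by apply: contra neq_yi => /eqP/(nth_perm_iota_inj wfP.2 lt_y lt_i) ->.
have := nth_expand_nth_index [::] (map (cat v) (leaves (tminus H))) lt_si _ neq_s.
by rewrite size_map wfH.1 size_minusP lt_s // => ->.
Qed.

Lemma tp_wf_product : tp_wf product_pair.
Proof.
split; rewrite nleaves_product; last exact: perm_expand_sig wfP.2 lt_i.
by rewrite leaves_minus_product size_expand_nth ?size_minusP ?lt_s // size_map wfH.1.
Qed.

Lemma in_kind_product k : in_kind k P -> in_kind k product_pair.
Proof.
have sig_iota : expand_sig (iota 0 N) i m = iota 0 (N + m - 1).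
  by rewrite -(rot0 (iota 0 N)) expand_sig_rot // ?subn0 ?lt_i ?rot0 // (leq_ltn_trans _ lt_i).
rewrite /product_pair; case: k => //=; rewrite nleaves_product; first by move=> ->.
move=> [r ->]; case: (ltnP r N) => [lt_r | le_Nr]; first by eexists; apply: expand_sig_rot.
by exists 0; rewrite rot_oversize ?size_iota // rot0.
Qed.

Lemma gh_no_replacement_below_u p : internal (tplus H) p -> ~ replaces_prefix gh (u ++ p).
Proof.
move=> p_int [y gh_up]; apply: (reduced_no_replacement n_gt1 redH p_int).
have [z _ act_z] : exists2 z, y = v ++ z & forall t, act H (prepend p t) = prepend z t.
  by apply: prepend_split => // t; rewrite -gh_inside prepend_cat gh_up.
by exists z.
Qed.

Lemma gh_no_replacement_in_P x : internal (tplus P) x -> ~ replaces_prefix gh x.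
Proof.
move=> x_int [y gh_x]; case: (boolP (prefix x u)) => [/prefixP[q eq_u] | not_xu].
  have [z _ act_z] : exists2 z, y ++ q = v ++ z & forall t, act H t = prepend z t.
    by apply: prepend_split => // t; rewrite -gh_inside eq_u -!prepend_cat gh_x.
  (* Above [u], [h] is itself a prefix replacement, so [H] is trivial. *)
  case plusH: (tplus H) => [|?].
    apply: (reduced_no_replacement n_gt1 redP x_int); exists y => t.
    by rewrite -gh_x /gmul (act_plus_Leaf n_gt1 wfH plusH) localize_id.
  apply: (reduced_no_replacement n_gt1 redH (x := [::])).
    by rewrite plusH; apply: internal_root.
  by exists z => t; rewrite prepend0 act_z.
have not_ux : ~~ prefix u x.
  apply: contra not_xu => pre_ux; case: x_int => l l_leaf /andP[pre_xl _].
  by rewrite (leaves_prefix_free u_leaf l_leaf (prefix_trans pre_ux pre_xl)).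
apply: (reduced_no_replacement n_gt1 redP x_int); exists y => t; rewrite -gh_x gh_outside //.
apply/negP => /(prefixb_comparable (prefixb_prepend x t)).
by rewrite (negbTE not_xu) (negbTE not_ux).
Qed.

Lemma reduced_product : reduced product_pair.
Proof.
apply/(reducedP n_gt1) => x; rewrite act_product.
case/(internal_graft u_leaf) => [x_int | [p p_int ->]].
  exact: gh_no_replacement_in_P.
exact: gh_no_replacement_below_u.
Qed.

End Product.

Theorem lemma3p8 (n : nat) (k : thompson_kind) (P H : tpair n) (i : nat) :
  2 <= n ->
  tp_wf P -> in_kind k P -> reduced P ->
  tp_wf H -> in_kind KF H -> reduced H ->
  i < nleaves P ->
  let v := nth [::] (leaves (tminus P)) (nth 0 (tsig P) i) in
  let gh' := gmul (act P) (localize v (act H)) in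
  (exists R : tpair n, [/\ tp_wf R, in_kind k R, reduced R & represents R gh']) /\
  (forall R : tpair n, tp_wf R -> reduced R -> represents R gh' ->
     nleaves R = nleaves P + nleaves H - 1).
Proof.
move=> n_gt1 wfP kindP redP wfH kindH redH lt_i v gh'.
have act_prod : act (product_pair P H i) = gh' by apply: act_product.
have red_prod : reduced (product_pair P H i) by apply: reduced_product.
split.
  exists (product_pair P H i); split=> //.
  - exact: tp_wf_product.
  - exact: in_kind_product.
  - by move=> w j; rewrite act_prod.
move=> R _ redR repR.
have act_R : act R = gh'.
  by apply: functional_extensionality => w; apply: functional_extensionality => j; apply: repR.
rewrite -(nleaves_product H lt_i); apply: (nleaves_reduced_act n_gt1 redR red_prod).
by rewrite act_R act_prod.
Qed.
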